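(* For every closed and guarded expression $\phi\in\mathcal{E}_0$ there exist a finite $T$-coalgebra $D=(Z,\theta)$ and a state $z\in Z$ such that for every $T$-coalgebra $C=(X,\xi)$, $[\![\phi]\!]_C$ is precisely the set of states of $C$ that are behaviourally equivalent to $z$.
   Context: Standing assumptions: $T:\mathbf{Set}\to\mathbf{Set}$ is a functor; $\mathcal{L}$ is a set of modalities with arities ($L/n$), each $L/n$ assigned an $n$-ary monotone singleton-preserving predicate lifting $[\![L]\!]$ for $T$ such that $\Lambda=\{[\![L]\!]\mid L\in\mathcal{L}\}$ is strongly expressive. (An $n$-ary predicate lifting is a family $\lambda_X:(\mathcal{P}X)^n\to\mathcal{P}(TX)$ with $\lambda_X(f^{-1}[A_1],\dots,f^{-1}[A_n])=(Tf)^{-1}[\lambda_Y(A_1,\dots,A_n)]$ for $f:X\to Y$; monotone if monotone in each argument; singleton-preserving if $|\lambda_X(\{x_1\},\dots,\{x_n\})|=1$ for all $x_i\in X$; $\Lambda$ strongly expressive if for every set $X$ and $t\in TX$ there are $\lambda/n\in\Lambda$, $x_i\in X$ with $\{t\}=\lambda_X(\{x_1\},\dots,\{x_n\})$.) Fix a set $V$ of variables. Expressions $\mathcal{E}$: $\phi::=z\mid\nu z.\,\phi\mid L(\phi_1,\dots,\phi_n)$. Closed: every variable occurrence bound by a $\nu$. Guarded: every variable occurrence is separated from its binding $\nu$ by at least one modality. $\mathcal{E}_0$ is the set of closed guarded expressions. Semantics in a coalgebra $C=(X,\xi)$ under valuation $\kappa:V\to\mathcal{P}X$: $[\![z]\!]^\kappa=\kappa(z)$;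 $[\![L(\phi_1,\dots,\phi_n)]\!]^\kappa=\xi^{-1}[[\![L]\!]_X([\![\phi_1]\!]^\kappa,\dots,[\![\phi_n]\!]^\kappa)]$; $[\![\nu z.\phi]\!]^\kappa=$ greatest fixed point of $Y\mapsto[\![\phi]\!]^{\kappa[z\mapsto Y]}$; for closed $\phi$ write $[\![\phi]\!]_C$. States of coalgebras are behaviourally equivalent if some coalgebra morphisms (maps $h$ with $Th\circ\xi=\zeta\circ h$) into a common coalgebra identify them. *)

From Stdlib Require Import List FinFun Classical ClassicalEpsilon.
From Stdlib Require Vectors.Fin.

Record Functor := {
  fobj :> Type -> Type;
  fmap : forall (X Y : Type), (X -> Y) -> fobj X -> fobj Y;
  fmap_id : forall (X : Type) (t : fobj X), fmap X X (fun x => x) t = t;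
  fmap_comp : forall (X Y W : Type) (f : X -> Y) (g : Y -> W) (t : fobj X),
      fmap X W (fun x => g (f x)) t = fmap Y W g (fmap X Y f t)
}.

Arguments fmap {_ _ _} _ _.

(* n-ary predicate liftings: subsets are predicates X -> Prop,
   an n-tuple of subsets is a map Fin.t n -> (X -> Prop). *)
Definition pred_lifting_fam (T : Functor) (n : nat) : Type :=
  forall X : Type, (Fin.t n -> X -> Prop) -> T X -> Prop.

Definition is_natural (T : Functor) (n : nat) (lam : pred_lifting_fam T n) : Prop :=
  forall (X Y : Type) (f : X -> Y) (A : Fin.t n -> Y -> Prop) (t : T X),
    lam X (fun i x => A i (f x)) t <-> lam Y A (fmap f t).

Definition is_monotone (T : Functor) (n : nat) (lam : pred_lifting_fam T n) : Prop :=
  forall (X : Type) (A B : Fin.t n -> X -> Prop),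
    (forall i x, A i x -> B i x) -> forall t, lam X A t -> lam X B t.

Definition singleton_preserving (T : Functor) (n : nat) (lam : pred_lifting_fam T n) : Prop :=
  forall (X : Type) (xs : Fin.t n -> X),
    exists t : T X, forall t', lam X (fun i y => y = xs i) t' <-> t' = t.

Definition strongly_expressive (T : Functor) (Lmod : Type) (ar : Lmod -> nat)
  (lift : forall l : Lmod, pred_lifting_fam T (ar l)) : Prop :=
  forall (X : Type) (t : T X), exists (l : Lmod) (xs : Fin.t (ar l) -> X),
    forall t', lift l X (fun i y => y = xs i) t' <-> t' = t.

Inductive expr (Lmod : Type) (ar : Lmod -> nat) (V : Type) : Type :=
| EVar : V -> expr Lmod ar V
| ENu : V -> expr Lmod ar V -> expr Lmod ar V
| EMod : forall l : Lmod, (Fin.t (ar l) -> expr Lmod ar V) -> expr Lmod ar V.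

Arguments EVar {_ _ _} _.
Arguments ENu {_ _ _} _ _.
Arguments EMod {_ _ _} _ _.

Fixpoint closed_in {Lmod ar V} (B : V -> Prop) (phi : expr Lmod ar V) : Prop :=
  match phi with
  | EVar z => B z
  | ENu z psi => closed_in (fun w => w = z \/ B w) psi
  | EMod l args => forall i, closed_in B (args i)
  end.

Definition closed {Lmod ar V} (phi : expr Lmod ar V) : Prop :=
  closed_in (fun _ => False) phi.

(* guarded_in U phi : U is the set of variables bound by a nu that is not
   separated from the current position by a modality; an occurrence of z is
   unguarded iff its binding nu lies after the last modality, i.e. z in U. *)
Fixpoint guarded_in {Lmod ar V} (U : V -> Prop) (phi : expr Lmod ar V) : Prop :=
  match phi with
  | EVar z => ~ U z
  | ENu z psi => guarded_in (fun w => w = z \/ U w) psi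
  | EMod l args => forall i, guarded_in (fun _ => False) (args i)
  end.

Definition guarded {Lmod ar V} (phi : expr Lmod ar V) : Prop :=
  guarded_in (fun _ => False) phi.

Definition upd {V X : Type} (kappa : V -> X -> Prop) (z : V) (Y : X -> Prop)
  : V -> X -> Prop :=
  fun w => if excluded_middle_informative (w = z) then Y else kappa w.

Definition gfp {X : Type} (F : (X -> Prop) -> (X -> Prop)) : X -> Prop :=
  fun x => exists Y : X -> Prop, (forall y, Y y -> F Y y) /\ Y x.

Fixpoint sem (T : Functor) {Lmod : Type} {ar : Lmod -> nat}
  (lift : forall l : Lmod, pred_lifting_fam T (ar l)) {V X : Type}
  (xi : X -> T X) (kappa : V -> X -> Prop) (phi : expr Lmod ar V) : X -> Prop :=
  match phi with
  | EVar z => kappa z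
  | EMod l args =>
      fun x => lift l X (fun i => sem T lift xi kappa (args i)) (xi x)
  | ENu z psi => gfp (fun Y => sem T lift xi (upd kappa z Y) psi)
  end.

(* semantics of a closed expression: valuation irrelevant, use the empty one *)
Definition sem_closed (T : Functor) {Lmod : Type} {ar : Lmod -> nat}
  (lift : forall l : Lmod, pred_lifting_fam T (ar l)) {V X : Type}
  (xi : X -> T X) (phi : expr Lmod ar V) : X -> Prop :=
  sem T lift xi (fun _ _ => False) phi.

Definition coalg_morphism (T : Functor) {X Y : Type}
  (xi : X -> T X) (zeta : Y -> T Y) (h : X -> Y) : Prop :=
  forall x, fmap h (xi x) = zeta (h x).

Definition beh_equiv (T : Functor) {X Z : Type}
  (xi : X -> T X) (theta : Z -> T Z) (x : X) (z : Z) : Prop :=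
  exists (W : Type) (omega : W -> T W) (h : X -> W) (g : Z -> W),
    coalg_morphism T xi omega h /\ coalg_morphism T theta omega g /\ h x = g z.

(* The modality occurrences of a closed guarded expression phi are the states of
   a finite coalgebra: an occurrence of L(phi_1, ..., phi_n) steps to the unique
   element of [[L]]({z_1}, ..., {z_n}) (singleton preservation), where z_i is the
   occurrence at which phi_i starts once fixpoints are unfolded; guardedness makes
   this start well defined.  A state satisfies phi iff it is behaviourally
   equivalent to the occurrence at which phi starts.  If x satisfies phi, the
   relation "x satisfies the subexpression at occurrence p" is a post-fixed point
   of the one-step lifting, and on X + Z any such relation generates a congruence
   whose quotient identifies x with the start of phi.  Conversely, behavioural
   equivalence to an occurrence is itself a post-fixed point, which yields each
   nu-subformula by coinduction. *)

From Stdlib Require Import List FinFun.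
From Stdlib Require Vectors.Fin.
From Stdlib Require Import ClassicalEpsilon FunctionalExtensionality.
From Stdlib Require Import PropExtensionality ProofIrrelevance.
From Stdlib Require Import Relation_Operators.

Section Occurrences.

Context {Lmod : Type} {ar : Lmod -> nat} {V Z : Type}.

Fixpoint mod_occ (psi : expr Lmod ar V) : Type :=
  match psi with
  | EVar _ => Empty_set
  | ENu _ p => mod_occ p
  | EMod l args => (unit + {i : Fin.t (ar l) & mod_occ (args i)})%type
  end.

Definition upd_val (e : V -> Z) (z : V) (a : Z) : V -> Z :=
  fun w => if excluded_middle_informative (w = z) then a else e w.

(* [emb] places the occurrences of [psi] among the states, [eps] gives the
   states of the free variables. *)
Fixpoint entry_state (psi : expr Lmod ar V) : (mod_occ psi -> Z) -> (V -> Z) -> Z :=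
  match psi as p0 return (mod_occ p0 -> Z) -> (V -> Z) -> Z with
  | EVar v => fun _ eps => eps v
  | ENu _ p => fun emb eps => entry_state p emb eps
  | EMod _ _ => fun emb _ => emb (inl tt)
  end.

Fixpoint occ_trans (psi : expr Lmod ar V) :
  (mod_occ psi -> Z) -> (V -> Z) -> mod_occ psi -> {l : Lmod & Fin.t (ar l) -> Z} :=
  match psi as p0
    return (mod_occ p0 -> Z) -> (V -> Z) -> mod_occ p0 -> {l : Lmod & Fin.t (ar l) -> Z}
  with
  | EVar _ => fun _ _ q => match q with end
  | ENu z p => fun emb eps => occ_trans p emb (upd_val eps z (entry_state p emb eps))
  | EMod l args => fun emb eps q =>
      match q with
      | inl _ => existT _ l (fun i => entry_state (args i) (fun q' => emb (inr (existT _ i q'))) eps)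
      | inr (existT _ i q') => occ_trans (args i) (fun q'' => emb (inr (existT _ i q''))) eps q'
      end
  end.

Lemma mod_occ_finite (psi : expr Lmod ar V) : Finite (mod_occ psi).
Proof.
  induction psi as [v | z p IH | l args IH].
  - exists nil. intros [].
  - exact IH.
  - set (f := fun i => proj1_sig (constructive_indefinite_description _ (IH i))).
    assert (Hf : forall i, Full (f i)).
    { intro i. unfold f. destruct (constructive_indefinite_description _ _). assumption. }
    destruct (Fin_Finite (ar l)) as [is His].
    exists (inl tt :: map inr (flat_map (fun i => map (existT _ i) (f i)) is)).
    intros [[] | [i q]]; [now left | right].
    apply in_map, in_flat_map. exists i. split; [apply His | apply in_map, Hf].
Qed.

Lemma mod_occ_inhabited (psi : expr Lmod ar V) (Bd U : V -> Prop) :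
  closed_in Bd psi -> guarded_in U psi -> (forall v, Bd v -> U v) ->
  inhabited (mod_occ psi).
Proof.
  revert Bd U.
  induction psi as [v | z p IH | l args IH]; simpl; intros Bd U Hc Hg HBU.
  - exfalso. exact (Hg (HBU v Hc)).
  - apply (IH _ _ Hc Hg). intros v [-> | Hv]; auto.
  - exact (inhabits (inl tt)).
Qed.

Lemma entry_state_guarded (psi : expr Lmod ar V) (U : V -> Prop)
  (emb : mod_occ psi -> Z) (e e' : V -> Z) :
  guarded_in U psi -> (forall v, ~ U v -> e v = e' v) ->
  entry_state psi emb e = entry_state psi emb e'.
Proof.
  revert U.
  induction psi as [v | z p IH | l args IH]; simpl; intros U Hg He.
  - exact (He v Hg).
  - apply (IH emb _ Hg). intros v Hv. apply He. intro; apply Hv; auto.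
  - reflexivity.
Qed.

End Occurrences.

Section Quotient.

Variables (A : Type) (R : A -> A -> Prop).

Definition quotient : Type :=
  {P : A -> Prop | exists a, P = clos_refl_sym_trans A R a}.

Definition quotient_map (a : A) : quotient :=
  exist _ (clos_refl_sym_trans A R a) (ex_intro _ a eq_refl).

Lemma quotient_map_sound (a b : A) :
  clos_refl_sym_trans A R a b -> quotient_map a = quotient_map b.
Proof.
  intro Hab. apply subset_eq_compat.
  apply functional_extensionality; intro c. apply propositional_extensionality.
  split; intro Hc.
  - exact (rst_trans _ _ _ _ _ (rst_sym _ _ _ _ Hab) Hc).
  - exact (rst_trans _ _ _ _ _ Hab Hc).
Qed.

Lemma quotient_coalgebra (T : Functor) (alpha : A -> T A) :
  (forall a b, R a b -> fmap quotient_map (alpha a) = fmap quotient_map (alpha b)) ->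
  exists omega : quotient -> T quotient, coalg_morphism T alpha omega quotient_map.
Proof.
  intro HR.
  assert (Hcong : forall a b, clos_refl_sym_trans A R a b ->
                    fmap quotient_map (alpha a) = fmap quotient_map (alpha b)).
  { intros a b Hab. induction Hab; congruence || auto. }
  exists (fun s : quotient => fmap quotient_map (alpha (proj1_sig
            (constructive_indefinite_description
               (fun a => proj1_sig s = clos_refl_sym_trans A R a) (proj2_sig s))))).
  intro a. simpl. destruct (constructive_indefinite_description _ _) as [a0 Ha0]; simpl.
  apply Hcong. rewrite Ha0. apply rst_refl.
Qed.

End Quotient.

Lemma coalg_morphism_comp (T : Functor) {X Y W : Type}
  (xi : X -> T X) (zeta : Y -> T Y) (omega : W -> T W) (f : X -> Y) (g : Y -> W) :
  coalg_morphism T xi zeta f -> coalg_morphism T zeta omega g ->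
  coalg_morphism T xi omega (fun x => g (f x)).
Proof.
  intros Hf Hg x. unfold coalg_morphism in *. rewrite fmap_comp, Hf. apply Hg.
Qed.

Section Semantics.

Context {T : Functor} {Lmod : Type} {ar : Lmod -> nat}
  (lift : forall l : Lmod, pred_lifting_fam T (ar l)).
Hypothesis Hnat : forall l, is_natural T (ar l) (lift l).
Hypothesis Hmono : forall l, is_monotone T (ar l) (lift l).
Hypothesis Hsing : forall l, singleton_preserving T (ar l) (lift l).

Context {V X : Type} (xi : X -> T X).

Lemma sem_monotone (psi : expr Lmod ar V) (k k' : V -> X -> Prop) :
  (forall v x, k v x -> k' v x) ->
  forall x, sem T lift xi k psi x -> sem T lift xi k' psi x.
Proof.
  revert k k'.
  induction psi as [v | z p IH | l args IH]; simpl; intros k k' Hk x Hx.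
  - auto.
  - destruct Hx as [Y [HY Yx]]. exists Y. split; [|exact Yx].
    intros y Hy. apply (IH (upd k z Y)); [|exact (HY y Hy)].
    intros v w. unfold upd. destruct (excluded_middle_informative (v = z)); auto.
  - eapply Hmono; [|exact Hx]. intros i y. apply IH; auto.
Qed.

(* [occ_sem psi k q] is the meaning of the subexpression at occurrence [q],
   with its free variables interpreted by unfolding the enclosing fixpoints. *)
Fixpoint occ_sem (psi : expr Lmod ar V) : (V -> X -> Prop) -> mod_occ psi -> X -> Prop :=
  match psi as p0 return (V -> X -> Prop) -> mod_occ p0 -> X -> Prop with
  | EVar _ => fun _ q => match q with end
  | ENu z p => fun k => occ_sem p (upd k z (sem T lift xi k (ENu z p)))
  | EMod l args => fun k q =>
      match q with
      | inl _ => sem T lift xi k (EMod l args)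
      | inr (existT _ i q') => occ_sem (args i) k q'
      end
  end.

Context {Z : Type} (ni : Z -> {l : Lmod & Fin.t (ar l) -> Z}) {theta : Z -> T Z}.
Hypothesis theta_spec :
  forall p, lift (projT1 (ni p)) Z (fun i y => y = projT2 (ni p) i) (theta p).

Definition lift_step (H : X -> Z -> Prop) (x : X) (p : Z) : Prop :=
  lift (projT1 (ni p)) X (fun i y => H y (projT2 (ni p) i)) (xi x).

Lemma lift_step_iff (H : X -> Z -> Prop) x p l r :
  ni p = existT _ l r ->
  (lift_step H x p <-> lift l X (fun i y => H y (r i)) (xi x)).
Proof. unfold lift_step. intros ->. reflexivity. Qed.

Lemma beh_equiv_postfixed (x : X) (p : Z) :
  beh_equiv T xi theta x p -> lift_step (fun y p' => beh_equiv T xi theta y p') x p.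
Proof.
  intros [W [om [h [g [mh [mg hg]]]]]].
  unfold lift_step. pose proof (theta_spec p) as Hth. revert Hth.
  destruct (ni p) as [l r]; simpl; intro Hth.
  assert (Hg : lift l W (fun i w => w = g (r i)) (fmap g (theta p))).
  { apply Hnat. eapply Hmono; [|exact Hth]. intros i y ->. reflexivity. }
  rewrite mg, <- hg, <- mh in Hg. apply Hnat in Hg.
  eapply Hmono; [|exact Hg]. intros i y E. exists W, om, h, g. auto.
Qed.

(* In the quotient of X + Z by [H], related [x] and [p] both step to the unique
   element of [lift l] at the singletons of the classes of the successors of [p]. *)
Lemma postfixed_beh_equiv (H : X -> Z -> Prop) :
  (forall x p, H x p -> lift_step H x p) ->
  forall x p, H x p -> beh_equiv T xi theta x p.
Proof.
  intros Hpost.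
  set (R := fun a b : X + Z =>
              match a, b with inl x, inr p => H x p | _, _ => False end).
  set (alpha := fun w : X + Z => match w with
                                  | inl x => fmap inl (xi x)
                                  | inr p => fmap inr (theta p)
                                  end).
  set (q := quotient_map (X + Z) R).
  destruct (quotient_coalgebra (X + Z) R T alpha) as [om Hom].
  { intros [x | p0] [x' | p] Hxp; try contradiction. simpl in Hxp |- *.
    rewrite <- !fmap_comp.
    pose proof (Hpost _ _ Hxp) as Hstep. unfold lift_step in Hstep.
    pose proof (theta_spec p) as Hth. revert Hstep Hth.
    destruct (ni p) as [l r]; simpl; intros Hstep Hth.
    destruct (Hsing l _ (fun i => q (inr (r i)))) as [t Ht].
    transitivity t; [|symmetry]; apply Ht, Hnat; eapply Hmono.
    2: exact Hstep. 3: exact Hth.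
    - intros i y Hy. apply quotient_map_sound, rst_step. exact Hy.
    - intros i y ->. reflexivity. }
  intros x p Hxp.
  exists (quotient (X + Z) R), om, (fun x => q (inl x)), (fun p => q (inr p)).
  split; [|split].
  - apply (coalg_morphism_comp T xi alpha om inl q); [intro; reflexivity | exact Hom].
  - apply (coalg_morphism_comp T theta alpha om inr q); [intro; reflexivity | exact Hom].
  - apply quotient_map_sound, rst_step. exact Hxp.
Qed.

Lemma sem_of_beh_equiv (psi : expr Lmod ar V) (emb : mod_occ psi -> Z) e k
  (Bd U : V -> Prop) :
  (forall q, ni (emb q) = occ_trans psi emb e q) ->
  closed_in Bd psi -> guarded_in U psi ->
  (forall v, Bd v -> forall x, beh_equiv T xi theta x (e v) -> k v x) ->
  forall x, beh_equiv T xi theta x (entry_state psi emb e) -> sem T lift xi k psi x.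
Proof.
  revert emb e k Bd U.
  induction psi as [v | z p IH | l args IH]; simpl; intros emb e k Bd U Hni Hc Hg Hk x Hx.
  - exact (Hk v Hc x Hx).
  - set (Y := fun y => beh_equiv T xi theta y (entry_state p emb e)).
    exists Y. split; [|exact Hx].
    intros y Hy.
    apply (IH emb (upd_val e z (entry_state p emb e)) (upd k z Y)
             (fun w => w = z \/ Bd w) (fun w => w = z \/ U w)); auto.
    + intros v Hv w Hw. unfold upd. unfold upd_val in Hw.
      destruct (excluded_middle_informative (v = z)); [exact Hw|].
      destruct Hv as [Hv | Hv]; [contradiction | auto].
    + erewrite entry_state_guarded; [exact Hy | exact Hg |].
      intros v Hv. unfold upd_val.
      destruct (excluded_middle_informative (v = z)); [subst; tauto | reflexivity].
  - apply beh_equiv_postfixed in Hx.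
    rewrite (lift_step_iff _ _ _ _ _ (Hni (inl tt))) in Hx.
    eapply Hmono; [|exact Hx]. simpl. intros i y Hy.
    apply (IH i _ e k Bd (fun _ => False) (fun q => Hni (inr (existT _ i q))) (Hc i) (Hg i) Hk y Hy).
Qed.

Section OccurrenceSemantics.

Context {S : Z -> X -> Prop}.

(* Unguarded variables, such as the one of an enclosing nu whose state is not
   yet recorded in [e], are exempt: guardedness keeps them off the [EVar] leaves
   reached without crossing a modality. *)
Lemma occ_sem_entry (psi : expr Lmod ar V) (emb : mod_occ psi -> Z) e k (Bd U : V -> Prop) :
  (forall q, S (emb q) = occ_sem psi k q) ->
  closed_in Bd psi -> guarded_in U psi ->
  (forall v, Bd v -> ~ U v -> forall x, k v x -> S (e v) x) ->
  forall x, sem T lift xi k psi x -> S (entry_state psi emb e) x.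
Proof.
  revert emb e k Bd U.
  induction psi as [v | z p IH | l args IH]; simpl; intros emb e k Bd U HS Hc Hg Hk x Hx.
  - exact (Hk v Hc Hg x Hx).
  - apply (IH emb e (upd k z (sem T lift xi k (ENu z p)))
             (fun w => w = z \/ Bd w) (fun w => w = z \/ U w)); auto.
    + intros v Hv Hu w Hw. unfold upd in Hw.
      destruct (excluded_middle_informative (v = z)); [exfalso; auto|].
      destruct Hv as [Hv | Hv]; [contradiction | auto].
    + destruct Hx as [Y [HY Yx]].
      apply (sem_monotone p (upd k z Y)); [|exact (HY x Yx)].
      intros v w. unfold upd. destruct (excluded_middle_informative (v = z)); auto.
      intro Hw. exists Y. auto.
  - exact (eq_ind_r (fun P : X -> Prop => P x) Hx (HS (inl tt))).
Qed.

Lemma occ_sem_postfixed (psi : expr Lmod ar V) (emb : mod_occ psi -> Z) e k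
  (Bd U : V -> Prop) :
  (forall q, ni (emb q) = occ_trans psi emb e q) ->
  (forall q, S (emb q) = occ_sem psi k q) ->
  closed_in Bd psi -> guarded_in U psi ->
  (forall v, Bd v -> forall x, k v x -> S (e v) x) ->
  forall q x, S (emb q) x -> lift_step (fun y p => S p y) x (emb q).
Proof.
  revert emb e k Bd U.
  induction psi as [v | z p IH | l args IH]; simpl; intros emb e k Bd U Hni HS Hc Hg Hk q x Hx.
  - destruct q.
  - apply (IH emb (upd_val e z (entry_state p emb e)) (upd k z (sem T lift xi k (ENu z p)))
             (fun w => w = z \/ Bd w) (fun w => w = z \/ U w)); auto.
    intros v Hv w Hw. unfold upd in Hw. unfold upd_val.
    destruct (excluded_middle_informative (v = z)).
    + apply (occ_sem_entry (ENu z p) emb e k Bd U); auto.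
    + destruct Hv as [Hv | Hv]; [contradiction | auto].
  - destruct q as [[] | [i q]].
    + rewrite (lift_step_iff _ _ _ _ _ (Hni (inl tt))).
      rewrite (HS (inl tt)) in Hx. simpl in Hx.
      eapply Hmono; [|exact Hx]. simpl. intros i y Hy.
      apply (occ_sem_entry (args i) _ e k Bd (fun _ => False)
               (fun q => HS (inr (existT _ i q))) (Hc i) (Hg i)); auto.
    + exact (IH i _ e k Bd (fun _ => False)
               (fun q' => Hni (inr (existT _ i q'))) (fun q' => HS (inr (existT _ i q')))
               (Hc i) (Hg i) Hk q x Hx).
Qed.

End OccurrenceSemantics.

End Semantics.

Theorem mainTheorem11
  (T : Functor) (Lmod : Type) (ar : Lmod -> nat)
  (lift : forall l : Lmod, pred_lifting_fam T (ar l))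
  (Hnat : forall l, is_natural T (ar l) (lift l))
  (Hmono : forall l, is_monotone T (ar l) (lift l))
  (Hsing : forall l, singleton_preserving T (ar l) (lift l))
  (Hexpr : strongly_expressive T Lmod ar lift)
  (V : Type) (phi : expr Lmod ar V)
  (Hclosed : closed phi) (Hguarded : guarded phi) :
  exists (Z : Type) (theta : Z -> T Z) (z : Z),
    Finite Z /\
    forall (X : Type) (xi : X -> T X) (x : X),
      sem_closed T lift xi phi x <-> beh_equiv T xi theta x z.
Proof.
  (* Any occurrence serves as the value of the (absent) free variables of [phi]. *)
  destruct (mod_occ_inhabited phi _ _ Hclosed Hguarded (fun _ h => h)) as [q0].
  set (e0 := fun _ : V => q0).
  set (ni := occ_trans phi (fun q => q) e0).
  destruct (choice (fun q t => lift (projT1 (ni q)) _ (fun i y => y = projT2 (ni q) i) t))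
    as [theta Htheta].
  { intro q. destruct (Hsing _ _ (projT2 (ni q))) as [t Ht]. exists t. apply Ht. reflexivity. }
  exists (mod_occ phi), theta, (entry_state phi (fun q => q) e0).
  split; [apply mod_occ_finite|].
  intros X xi x. split.
  - intro Hx.
    pose (S := occ_sem lift xi phi (fun _ _ => False)).
    apply (postfixed_beh_equiv lift Hnat Hmono Hsing xi ni Htheta (fun y p => S p y)).
    + intros y p.
      exact (occ_sem_postfixed lift Hmono xi ni phi _ e0 _ _ _
               (fun _ => eq_refl) (fun _ => eq_refl) Hclosed Hguarded
               (fun _ => False_ind _) p y).
    + exact (occ_sem_entry (S := S) lift Hmono xi phi _ e0 _ _ _
               (fun _ => eq_refl) Hclosed Hguarded (fun _ => False_ind _) x Hx).
  - exact (sem_of_beh_equiv lift Hnat Hmono xi ni Htheta phi _ e0 _ _ _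
             (fun _ => eq_refl) Hclosed Hguarded (fun _ => False_ind _) x).
Qed.
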